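(* Let $T_n \doteq (n+1)^{-3/4}$, $A_n \doteq (n+1)^{1/4}$ and $p_n \doteq T_n/A_n = \frac{1}{n+1}$ for $n\ge 0$. Let $\{X_{n+1}\}_{n\ge0}$ be independent random variables with $X_{n+1}=A_n$ with probability $p_n$ and $X_{n+1}=0$ with probability $1-p_n$. Let $\mathcal{F}_n=\sigma(X_1,\dots,X_n)$, $z_0=0$ and $z_{n+1}=(1-T_n)z_n+X_{n+1}$ for $n\ge0$. Then $\{T_n\}$ satisfies $\sum_n T_n=\infty$, $\sum_n T_n^2<\infty$, and: (1) $\mathbb{E}[z_{n+1}\mid\mathcal{F}_n]=(1-T_n)z_n+T_n$ for all $n\ge 0$, i.e. $\{z_n\}$ satisfies $\mathbb{E}[z_{n+1}\mid \mathcal F_n]\le(1-\alpha T_n)z_n+\xi T_n$ with $\alpha=\xi=1$; (2) $\limsup_{n\to\infty} z_n=\infty$ almost surely. *)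

From HB Require Import structures.
From mathcomp Require Import all_boot all_order all_algebra.
From mathcomp Require Import all_classical all_reals all_analysis.
Set Implicit Arguments. Unset Strict Implicit. Unset Printing Implicit Defensive.
Import Order.TTheory GRing.Theory Num.Theory.
Import numFieldNormedType.Exports.
Local Open Scope classical_set_scope.
Local Open Scope ring_scope.

Section Defs.
Variable R : realType.

Definition Tseq (n : nat) : R := (n.+1%:R) `^ (- (3 / 4)).
Definition Aseq (n : nat) : R := (n.+1%:R) `^ (1 / 4).
Definition pseq (n : nat) : R := Tseq n / Aseq n.

Context d (T : measurableType d) (P : probability T R).

Fixpoint zseq (X : nat -> T -> R) (n : nat) : T -> R :=
  match n with
  | 0%N => fun _ => 0
  | m.+1 => fun x => (1 - Tseq m) * zseq X m x + X m.+1 x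
  end.

Definition gen_Fn (X : nat -> T -> R) (n : nat) : set_system T :=
  [set A | exists k (B : set R),
     [/\ (0 < k <= n)%N, measurable B & A = X k @^-1` B]].

Definition Fn (X : nat -> T -> R) (n : nat) : set_system T := <<s gen_Fn X n >>.

Definition mutually_independent (X : nat -> T -> R) : Prop :=
  forall (I : seq nat) (B : nat -> set R), uniq I ->
    (forall i, i \in I -> measurable (B i)) ->
    P (\big[setI/setT]_(i <- I) (X i.+1 @^-1` B i)) =
    (\prod_(i <- I) P (X i.+1 @^-1` B i))%E.

(* Y is a version of the conditional expectation E[Z | F]
   (F a sigma-algebra on T contained in the measurable sets) *)
Definition is_cond_exp (F : set_system T) (Z Y : T -> R) : Prop :=
  [/\ forall B : set R, measurable B -> F (Y @^-1` B),
      P.-integrable setT (EFin \o Z),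
      P.-integrable setT (EFin \o Y) &
      forall A, F A -> (\int[P]_(x in A) (Z x)%:E = \int[P]_(x in A) (Y x)%:E)%E].

End Defs.

From HB Require Import structures.
From mathcomp Require Import all_boot all_order all_algebra.
From mathcomp Require Import all_classical all_reals all_analysis.
From mathcomp Require Import ring lra measurable_realfun.
Import Order.TTheory GRing.Theory Num.Theory.
Import numFieldNormedType.Exports.
Local Open Scope classical_set_scope.
Local Open Scope ring_scope.

(* T_n is the Riemann sequence of exponent 3/4, so sum_n T_n diverges, while
   T_n^2 = (n+1)^(-3/2) is dominated by the telescoping differences
   2 (1/sqrt(n) - 1/sqrt(n+1)).

   Every event of F_n is independent of X_{n+1} (pi-lambda theorem applied to
   the cylinders of X_1, ..., X_n), so integrating
   z_{n+1} = (1 - T_n) z_n + X_{n+1} over it, the X_{n+1} term contributes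
   A_n p_n P(A) = T_n P(A).

   By independence, X_{k+1} misses A_k for all m <= k < m + N with probability
   prod (1 - 1/(k+1)) = m / (m + N), so almost surely X_{k+1} = A_k for
   infinitely many k. Since z stays nonnegative, z_{k+1} >= X_{k+1} = A_k
   there, and A_k is unbounded. *)

(* Applied with [a = sqrt (k + 1)] and [b = sqrt (k + 2)]. *)
Lemma invX3_le_2_subV (R : realFieldType) (a b : R) :
  0 < a -> a <= b -> b ^+ 2 = a ^+ 2 + 1 -> (b ^+ 3)^-1 <= 2 * (a^-1 - b^-1).
Proof.
move=> a0 ab hb; have b0 : 0 < b by apply: lt_le_trans ab.
rewrite -subr_ge0.
have -> : 2 * (a^-1 - b^-1) - (b ^+ 3)^-1 =
    ((b - a) * (2 * b ^+ 2 - a * (a + b))) / (a * b ^+ 3).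
  rewrite (_ : (b - a) * (2 * b ^+ 2 - a * (a + b)) = 2 * b ^+ 2 * (b - a) - a).
    by field; rewrite !gt_eqF.
  have a_eq : a = a * (b ^+ 2 - a ^+ 2) by rewrite hb; ring.
  by rewrite [X in _ = _ - X]a_eq; ring.
apply: divr_ge0; last by rewrite mulr_ge0 ?exprn_ge0 ?ltW.
apply: mulr_ge0; first lra.
rewrite subr_ge0 mulrDr -expr2 [2 * _]mulr_natl mulr2n.
apply: lerD; first by rewrite hb lerDl.
by rewrite expr2 ler_pM2r.
Qed.

Lemma prod_1_subVn (R : numFieldType) m N :
  (\prod_(m <= i < m + N) (1 - i.+1%:R^-1 : R)) * (m + N)%:R = m%:R.
Proof.
elim: N => [|N IH]; first by rewrite addn0 big_geq// mul1r.
rewrite addnS big_nat_recr/= ?leq_addr// -mulrA -[in RHS]IH; congr (_ * _).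
by rewrite mulrBl mul1r mulVf ?pnatr_eq0// -natr1 addrK.
Qed.

Section step_sizes.
Variable R : realType.

Lemma Tseq_gt0 n : 0 < Tseq R n.
Proof. by rewrite /Tseq powR_gt0// ltr0n. Qed.

Lemma Aseq_gt0 n : 0 < Aseq R n.
Proof. by rewrite /Aseq powR_gt0// ltr0n. Qed.

Lemma pseqE n : pseq R n = n.+1%:R^-1.
Proof.
rewrite /pseq /Tseq /Aseq -powRB ?pnatr_eq0 ?implybT//.
by rewrite (_ : - (3/4) - 1/4 = - 1 :> R) ?powR_inv1//; field.
Qed.

Lemma Aseq_mul_pseq n : Aseq R n * pseq R n = Tseq R n.
Proof. by rewrite /pseq mulrC divfK// gt_eqF// Aseq_gt0. Qed.

Lemma Tseq_le1 n : Tseq R n <= 1.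
Proof.
rewrite /Tseq powRN invf_le1 ?powR_gt0 ?ltr0n//.
by rewrite -[leLHS](powRr0 n.+1%:R) ler_powR ?ler1n//; lra.
Qed.

Lemma Aseq_unbounded (M : R) : exists N, forall n, (N <= n)%N -> M <= Aseq R n.
Proof.
exists (Num.truncn (`|M| `^ 4)) => n Nn; apply: le_trans (ler_norm M) _.
have -> : `|M| = (`|M| `^ 4) `^ (1/4).
  by rewrite -powRrM (_ : 4 * (1/4) = 1 :> R) ?powRr1//; field.
rewrite /Aseq ge0_ler_powR ?nnegrE ?powR_ge0 ?ler0n//.
by apply/ltW/(lt_le_trans (truncnS_gt _)); rewrite ler_nat ltnS.
Qed.

Lemma series_Tseq_dvg : [series Tseq R k]_k @ \oo --> +oo.
Proof.
apply: nondecreasing_dvgn_lt.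
  by apply: nondecreasing_series => k _ _; exact/ltW/Tseq_gt0.
have -> : [series Tseq R k]_k = series (riemannR (3/4)).
  by congr series; apply/funext => k; rewrite /Tseq /= powRN.
by apply: dvg_riemannR; apply/andP; split; lra.
Qed.

Lemma Tseq_sqrE k : Tseq R k ^+ 2 = (Num.sqrt k.+1%:R ^+ 3)^-1.
Proof.
rewrite /Tseq -powR_mulrn ?powR_ge0// -powRrM.
rewrite (_ : - (3/4) * 2%:R = - (2^-1) * 3%:R :> R); last by field.
by rewrite powRrM powR_mulrn ?powR_ge0// powRN powR12_sqrt ?ler0n// exprVn.
Qed.

Lemma sum_Tseq_sqr_le n : \sum_(0 <= k < n) Tseq R k.+1 ^+ 2 <= 2.
Proof.
pose s k : R := (Num.sqrt k.+1%:R)^-1.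
have step k : Tseq R k.+1 ^+ 2 <= 2 * (s k - s k.+1).
  rewrite Tseq_sqrE; apply: invX3_le_2_subV.
  - by rewrite sqrtr_gt0 ltr0n.
  - by rewrite ler_sqrt ?ltr0n// ler_nat.
  - by rewrite !sqr_sqrtr ?ler0n// -natr1.
have sum_le m : \sum_(0 <= k < m) Tseq R k.+1 ^+ 2 <= 2 * (1 - s m).
  elim: m => [|m IH]; first by rewrite big_geq// /s sqrtr1 invr1 subrr mulr0.
  by rewrite big_nat_recr//= (le_trans (lerD IH (step m)))//; lra.
have : 0 <= s n by rewrite invr_ge0 sqrtr_ge0.
by move: (sum_le n); lra.
Qed.

Lemma series_Tseq_sqr_cvg : cvg ([series Tseq R k ^+ 2]_k @ \oo).
Proof.
apply: nondecreasing_is_cvgn.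
  by apply: nondecreasing_series => k _ _; exact: sqr_ge0.
exists 3 => _ [[|n] _ <-] /=; first by rewrite /series /= big_geq.
rewrite /series /= big_nat_recl// Tseq_sqrE sqrtr1 expr1n invr1.
by move: (sum_Tseq_sqr_le n); lra.
Qed.

End step_sizes.

Section measure_facts.
Local Open Scope ereal_scope.
Context {R : realType} {d : measure_display} {T : measurableType d}.

Lemma ae_eq_integrable {mu : {measure set T -> \bar R}} {f g : T -> \bar R} :
  ae_eq mu setT f g -> measurable_fun setT f ->
  mu.-integrable setT g -> mu.-integrable setT f.
Proof.
move=> [N [mN N0 fgN]] mf ig; apply/(negligible_integrable mN) => //.
apply: (@eq_integrable _ _ _ _ _ (measurableD measurableT mN) g).
  move=> x /set_mem [_ Nx]; apply: contrapT => gfx; apply: Nx; apply: fgN.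
  by move=> /(_ Logic.I) fgx; apply: gfx.
by apply: integrableS ig => //; exact: measurableD.
Qed.

Lemma dynkin_indep_with (P : probability T R) (E : set T) : measurable E ->
  dynkin [set S | measurable S /\ P (S `&` E) = P S * P E].
Proof.
move=> mE; have PfinE A : measurable A -> P A = (fine (P A))%:E.
  by move=> mA; rewrite fineK// fin_num_measure.
split.
- by split; rewrite ?setTI ?probability_setT ?mul1e.
- move=> S [mS PSE]; split; first exact: measurableC.
  rewrite setIC -setDE measureD// ?(le_lt_trans (probability_le1 _ mE)) ?ltry//.
  change (P E - P (E `&` S) = P (~` S) * P E).
  rewrite setIC PSE probability_setC// (PfinE _ mS) (PfinE _ mE).
  by rewrite -EFinM -!EFinB -EFinM; congr EFin; ring.
- move=> F tF HF; split; first by apply: bigcupT_measurable => k; case: (HF k).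
  rewrite setI_bigcupl measure_bigcup; last exact: trivIset_setIr.
    2: by move=> i _; apply: measurableI => //; case: (HF i).
  rewrite measure_bigcup; [|by move=> i _; case: (HF i)|exact: tF].
  rewrite (PfinE _ mE) muleC -nneseriesZl; last by move=> i _.
  by apply: eq_eseriesr => i _; rewrite muleC -(PfinE _ mE); case: (HF i).
Qed.

End measure_facts.

Section counterexample.
Variables (R : realType) (d : measure_display) (T : measurableType d)
  (P : probability T R) (X : nat -> T -> R).
Hypothesis Xmeas : forall n, measurable_fun setT (X n.+1).
Hypothesis Xindep : mutually_independent P X.
Hypothesis XA : forall n, P (X n.+1 @^-1` [set Aseq R n]) = (pseq R n)%:E.
Hypothesis X0 : forall n, P (X n.+1 @^-1` [set 0]) = (1 - pseq R n)%:E.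

Lemma measurable_preimage_X k B : measurable B -> measurable (X k.+1 @^-1` B).
Proof. by move=> mB; rewrite -[X _ @^-1` _]setTI; exact: Xmeas. Qed.

Definition hit k := X k.+1 @^-1` [set Aseq R k].
Definition off_support k := X k.+1 @^-1` ~` ([set Aseq R k] `|` [set 0]).

Lemma measurable_hit k : measurable (hit k).
Proof. exact: measurable_preimage_X. Qed.

Lemma measurable_off_support k : measurable (off_support k).
Proof. by apply: measurable_preimage_X; apply: measurableC; exact: measurableU. Qed.

Lemma X_eq_indic_hit k x :
  ~ off_support k x -> X k.+1 x = Aseq R k * \1_(hit k) x.
Proof.
rewrite /off_support /= => /contrapT [XkA|Xk0].
  by rewrite indicE mem_set ?mulr1.
rewrite indicE memNset ?mulr0//= /hit /= Xk0 => A0.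
by move: (Aseq_gt0 R k); rewrite -A0 ltxx.
Qed.

Lemma X_ge0 k x : ~ off_support k x -> 0 <= X k.+1 x.
Proof.
by move/X_eq_indic_hit ->; rewrite mulr_ge0 ?indic_ge0// ltW// Aseq_gt0.
Qed.

Lemma zseq_ge0 x : (forall k, ~ off_support k x) -> forall n, 0 <= zseq X n x.
Proof.
move=> sx; elim=> [|n IH] //=.
by rewrite addr_ge0 ?X_ge0// mulr_ge0// subr_ge0 Tseq_le1.
Qed.

Lemma zseq_ge_Aseq x k : (forall k, ~ off_support k x) -> hit k x ->
  Aseq R k <= zseq X k.+1 x.
Proof.
move=> sx hk /=; rewrite hk lerDr.
by rewrite mulr_ge0 ?zseq_ge0// subr_ge0 Tseq_le1.
Qed.

Definition cylinder n : set_system T := [set S | exists B : nat -> set R,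
  (forall i, measurable (B i)) /\
  S = \big[setI/setT]_(0 <= i < n) (X i.+1 @^-1` B i)].

Lemma cylinder_setI_closed n : setI_closed (cylinder n).
Proof.
move=> S1 S2 [B1 [mB1 ->]] [B2 [mB2 ->]].
exists (fun i => B1 i `&` B2 i); split; first by move=> i; exact: measurableI.
by rewrite -big_split /=; apply: eq_bigr => i _; exact: preimage_setI.
Qed.

Lemma measurable_cylinder n S : cylinder n S -> measurable S.
Proof.
move=> [B [mB ->]]; apply: big_ind => //; first exact: measurableI.
by move=> i _; exact: measurable_preimage_X.
Qed.

Lemma gen_Fn_sub_cylinder n : gen_Fn X n `<=` cylinder n.
Proof.
move=> _ [k [B [/andP[k0 kn] mB ->]]].
exists (fun i => if i == k.-1 then B else setT); split.
  by move=> i; case: ifP.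
rewrite (bigD1_seq k.-1) /=; last exact: iota_uniq.
  rewrite eqxx big1 ?setIT ?prednK//.
  by move=> i /negPf ->; exact: preimage_setT.
by rewrite mem_index_iota; case: k k0 kn => // k _ /=; rewrite prednK.
Qed.

Lemma Fn_measurable_zseq n m : (m <= n)%N ->
  @measurable_fun _ _ (g_sigma_algebraType (gen_Fn X n)) R setT (zseq X m).
Proof.
elim: m => [_|m IH mn]; first exact: measurable_cst.
apply: measurable_funD.
  by apply: measurable_funM => //; apply: IH; exact: ltnW.
move=> _ B mB; rewrite setTI; apply: sub_sigma_algebra.
by exists m.+1, B; split.
Qed.

Lemma Fn_preimage_cond_mean n B : measurable B ->
  Fn X n ((fun x => (1 - Tseq R n) * zseq X n x + Tseq R n) @^-1` B).
Proof.
move=> mB; have mY : @measurable_fun _ _ (g_sigma_algebraType (gen_Fn X n)) R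
    setT (fun x => (1 - Tseq R n) * zseq X n x + Tseq R n).
  by apply: measurable_funD => //; apply: measurable_funM => //; exact: Fn_measurable_zseq.
by rewrite -[_ @^-1` B]setTI; exact: mY.
Qed.

Definition never_hit_from m := \bigcap_k ~` hit (m + k).

Lemma measurable_never_hit_from m : measurable (never_hit_from m).
Proof. by apply: bigcapT_measurable => k; apply: measurableC; exact: measurable_hit. Qed.

Local Open Scope ereal_scope.

Lemma P_off_support k : P (off_support k) = 0.
Proof.
have PU : P (X k.+1 @^-1` ([set Aseq R k] `|` [set 0%R])) = 1.
  rewrite preimage_setU measureU; [|exact: measurable_preimage_X..|].
    change (P (X k.+1 @^-1` [set Aseq R k]) + P (X k.+1 @^-1` [set 0%R]) = 1).
    by rewrite XA X0 -EFinD addrC subrK.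
  apply/seteqP; split => x //= [-> A0].
  by move: (Aseq_gt0 R k); rewrite A0 ltxx.
rewrite /off_support -preimage_setC probability_setC ?PU -?EFinB ?subrr//.
by apply: measurable_preimage_X; exact: measurableU.
Qed.

Lemma X_ae_eq_indic k : ae_eq P setT (EFin \o X k.+1)
  (fun x => (Aseq R k)%:E * (\1_(hit k) x)%:E).
Proof.
exists (off_support k); split; [exact: measurable_off_support|exact: P_off_support|].
move=> x /= /not_implyP [_ Xx]; apply: contrapT => /X_eq_indic_hit Xxe.
by apply: Xx; rewrite Xxe.
Qed.

Lemma integrable_X k : P.-integrable setT (EFin \o X k.+1).
Proof.
apply: (ae_eq_integrable (X_ae_eq_indic k)); first exact/measurable_EFinP.
by apply: integrableZl => //; apply: integrable_indic; exact: measurable_hit.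
Qed.

Lemma integral_X k A : measurable A ->
  \int[P]_(x in A) (X k.+1 x)%:E = (Aseq R k)%:E * P (hit k `&` A).
Proof.
move=> mA; have mI : measurable_fun A (\1_(hit k) : T -> R).
  exact: measurable_indic (measurable_hit k).
have XAe := @ae_eq_subset _ _ _ _ P setT A _ _ (subsetT A) (X_ae_eq_indic k).
rewrite (ae_eq_integral _ _ mA _ _ XAe).
- rewrite integralZl ?integral_indic//; first exact: measurable_hit.
  by apply: (integrableS measurableT) => //; exact/integrable_indic/measurable_hit.
- by apply/measurable_EFinP; exact: measurable_funS (Xmeas k).
- by apply/measurable_EFinP; exact: measurable_funM.
Qed.

Lemma integrable_zseq n : P.-integrable setT (EFin \o zseq X n).
Proof.
elim: n => [|n IH].
  by apply: (@eq_integrable _ _ _ _ _ measurableT (cst 0)) => //; exact: integrable0.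
apply: (@eq_integrable _ _ _ _ _ measurableT
  (fun x => (1 - Tseq R n)%:E * (zseq X n x)%:E + (X n.+1 x)%:E)).
  by move=> x _ /=; rewrite -EFinM -EFinD.
by apply: integrableD => //; [exact: integrableZl|exact: integrable_X].
Qed.

Lemma cylinder_indep n B S : measurable B -> cylinder n S ->
  P (S `&` X n.+1 @^-1` B) = P S * P (X n.+1 @^-1` B).
Proof.
move=> mB [C [mC ->]].
pose C' i := if i == n then B else C i.
have mC' i : measurable (C' i) by rewrite /C'; case: ifP.
have C'n : C' n = B by rewrite /C' eqxx.
have C'E : \big[setI/setT]_(0 <= i < n) (X i.+1 @^-1` C i) =
           \big[setI/setT]_(0 <= i < n) (X i.+1 @^-1` C' i).
  by apply: eq_big_nat => i /andP[_ ilt]; rewrite /C' ltn_eqF.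
have PC'E : \prod_(0 <= i < n) P (X i.+1 @^-1` C i) =
            \prod_(0 <= i < n) P (X i.+1 @^-1` C' i).
  by apply: eq_big_nat => i /andP[_ ilt]; rewrite /C' ltn_eqF.
have := Xindep (index_iota 0 n.+1) C' (iota_uniq _ _) (fun i _ => mC' i).
rewrite big_nat_recr//= big_nat_recr//= C'n -C'E => ->.
by rewrite C'E (Xindep (index_iota 0 n) C' (iota_uniq _ _) (fun i _ => mC' i)) -PC'E.
Qed.

Lemma Fn_indep n B A : measurable B -> Fn X n A ->
  measurable A /\ P (A `&` X n.+1 @^-1` B) = P A * P (X n.+1 @^-1` B).
Proof.
move=> mB FA.
have : <<s cylinder n >> A by exact: (sub_sigma_algebra2 (@gen_Fn_sub_cylinder n)).
move: A {FA}; apply: (@lambda_system_subset _ _ (@cylinder_setI_closed n) setT).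
- exact/dynkin_lambda_system/dynkin_indep_with/measurable_preimage_X.
- move=> S cS; split; [exact: measurable_cylinder cS|exact: cylinder_indep mB cS].
- by [].
Qed.

Lemma is_cond_exp_zseq n : is_cond_exp P (Fn X n) (zseq X n.+1)
  (fun x => (1 - Tseq R n) * zseq X n x + Tseq R n)%R.
Proof.
have iZ : P.-integrable setT (fun x => (1 - Tseq R n)%:E * (zseq X n x)%:E).
  exact: integrableZl (integrable_zseq n).
have iT : P.-integrable setT (cst (Tseq R n)%:E).
  exact: finite_measure_integrable_cst.
split.
- exact: Fn_preimage_cond_mean.
- exact: integrable_zseq.
- apply: (@eq_integrable _ _ _ _ _ measurableT
    (fun x => (1 - Tseq R n)%:E * (zseq X n x)%:E + cst (Tseq R n)%:E x)).
    by move=> x _ /=; rewrite -EFinM -EFinD.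
  exact: integrableD.
- move=> A FA; have [mA PAhit] := Fn_indep n _ _ (measurable_set1 (Aseq R n)) FA.
  transitivity (\int[P]_(x in A)
      ((1 - Tseq R n)%:E * (zseq X n x)%:E + (X n.+1 x)%:E)).
    by apply: eq_integral => x _ /=; rewrite -EFinM -EFinD.
  transitivity (\int[P]_(x in A)
      ((1 - Tseq R n)%:E * (zseq X n x)%:E + cst (Tseq R n)%:E x)); last first.
    by apply: eq_integral => x _ /=; rewrite -EFinM -EFinD.
  have iA f : P.-integrable setT f -> P.-integrable A f by exact: integrableS.
  rewrite integralD//; [|exact: iA|exact: iA (integrable_X n)].
  rewrite [RHS]integralD//; [|exact: iA..].
  congr (_ + _); rewrite integral_X// integral_cst// setIC PAhit XA.
  by rewrite -Aseq_mul_pseq EFinM muleA muleAC.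
Qed.

Lemma P_not_hit i : P (X i.+1 @^-1` ~` [set Aseq R i]) = (1 - i.+1%:R^-1)%:E.
Proof.
rewrite -preimage_setC probability_setC; last exact: measurable_preimage_X.
by rewrite XA pseqE.
Qed.

Lemma P_never_hit_from_le m N :
  P (never_hit_from m) <= (\prod_(m <= i < m + N) (1 - i.+1%:R^-1 : R))%:E.
Proof.
have mB i : measurable (~` [set Aseq R i]) by exact: measurableC.
apply: (@le_trans _ _ (P (\big[setI/setT]_(m <= i < m + N)
    (X i.+1 @^-1` ~` [set Aseq R i])))).
  apply: le_measure; rewrite ?inE.
  - exact: measurable_never_hit_from.
  - apply: big_ind => //; first exact: measurableI.
    by move=> i _; exact: measurable_preimage_X.
  - move=> x nx; rewrite big_seq; apply: (big_ind (fun A : set T => A x)) => //.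
    move=> i; rewrite mem_index_iota => /andP[mi _].
    by have := nx (i - m)%N Logic.I; rewrite subnKC.
rewrite (Xindep (index_iota m (m + N)) _ (iota_uniq _ _) (fun i _ => mB i)).
by rewrite -prodEFin (eq_bigr _ (fun i _ => P_not_hit i)) lexx.
Qed.

Lemma P_never_hit_from m : P (never_hit_from m) = 0.
Proof.
have Pfin := fin_num_measure P _ (measurable_never_hit_from m).
rewrite -(fineK Pfin); congr EFin.
set c := fine (P (never_hit_from m)).
have c0 : (0 <= c)%R by rewrite fine_ge0.
apply/eqP; rewrite eq_le c0 andbT leNgt; apply/negP => cpos.
pose N := (Num.truncn (m%:R / c)).+1.
have := P_never_hit_from_le m N; rewrite -(fineK Pfin) -/c lee_fin.
have mN0 : (0 < (m + N)%:R :> R)%R by rewrite ltr0n addnS.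
have -> : (\prod_(m <= i < m + N) (1 - i.+1%:R^-1 : R) = m%:R / (m + N)%:R)%R.
  by rewrite -(prod_1_subVn R m N) mulfK// gt_eqF.
rewrite ler_pdivlMr//; apply/negP; rewrite -ltNge.
apply: (@lt_le_trans _ _ (c * N%:R)%R); last by rewrite ler_pM2l// ler_nat leq_addl.
by rewrite mulrC -ltr_pdivrMr// truncnS_gt.
Qed.

Lemma limn_esup_zseq x : (forall k, ~ off_support k x) ->
  (forall m, exists2 k, (m <= k)%N & hit k x) ->
  limn_esup (fun n => (zseq X n x)%:E) = +oo.
Proof.
move=> sx hx; rewrite limn_esup_lim.
suff -> : esups (fun n => (zseq X n x)%:E) = cst +oo.
  by apply: cvg_lim => //; exact: cvg_cst.
apply/funext => n; apply/eqyP => M _.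
have [N AM] := Aseq_unbounded R M.
have [k nNk hk] := hx (maxn n N).
apply: (@le_trans _ _ (zseq X k.+1 x)%:E).
  rewrite lee_fin (le_trans (AM k _)) ?zseq_ge_Aseq//.
  exact: leq_trans (leq_maxr _ _) nNk.
apply: ereal_sup_ubound; exists k.+1 => //=.
by rewrite leqW// (leq_trans (leq_maxl _ _) nNk).
Qed.

Lemma ae_limn_esup_zseq :
  {ae P, forall x, limn_esup (fun n => (zseq X n x)%:E) = +oo}.
Proof.
have null : P.-negligible
    ((\bigcup_k off_support k) `|` (\bigcup_m never_hit_from m)).
  apply: negligibleU; apply: negligible_bigcup => k.
    exists (off_support k); split => //.
    - exact: measurable_off_support.
    - exact: P_off_support.
  exists (never_hit_from k); split => //.
  - exact: measurable_never_hit_from.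
  - exact: P_never_hit_from.
apply: (negligibleS _ null) => x /= xbad; apply: contrapT => xgood; apply: xbad.
apply: limn_esup_zseq => [k sk|m].
  by apply: xgood; left; exists k.
apply: contrapT => nohit; apply: xgood; right; exists m => // j _ /= hj.
by apply: nohit; exists (m + j)%N; rewrite ?leq_addr.
Qed.

End counterexample.

Theorem mainTheorem1 (R : realType) (d : measure_display) (T : measurableType d)
  (P : probability T R) (X : nat -> T -> R)
  (Xmeas : forall n, measurable_fun setT (X n.+1))
  (Xindep : mutually_independent P X)
  (XA : forall n, P (X n.+1 @^-1` [set Aseq R n]) = (pseq R n)%:E)
  (X0 : forall n, P (X n.+1 @^-1` [set 0]) = (1 - pseq R n)%:E) :
  [/\ [series Tseq R k]_k @ \oo --> +oo,
      cvg ([series (Tseq R k) ^+ 2]_k @ \oo),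
      (forall n, is_cond_exp P (Fn X n) (zseq X n.+1)
                   (fun x => (1 - Tseq R n) * zseq X n x + Tseq R n)) &
      {ae P, forall x, limn_esup (fun n => (zseq X n x)%:E) = +oo%E}].
Proof.
split.
- exact: series_Tseq_dvg.
- exact: series_Tseq_sqr_cvg.
- by move=> n; apply: is_cond_exp_zseq.
- exact: ae_limn_esup_zseq.
Qed.
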